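(* Let $n\ge1$, $\gamma>1$, $V_0>0$, $\rho\in(0,1/n)$, $\theta>1$, $t\in[0,n]$, $\vartheta\in(0,1)$, original qualities $\alpha_1>\dots>\alpha_n>0$, and let $h:[0,1]\to[1,\infty)$ be differentiable, increasing and concave with $h(0)=1$, $h(1)=\bar h>1$. Assume $n\frac{\gamma-1}{\gamma}<1$, $\bar h^{1/\gamma}>\frac1{1-n\rho}$, and $\frac{h'(x)}{\gamma h(x)}>\frac{n\rho}{1-n\rho x}$ for all $x\in[0,1]$. Let $V^*=\frac{\gamma-1}{n-(n-1)\gamma}V_0$. Consider the simultaneous game in which each seller $i$ chooses $x_i\in[0,1]$ to maximize $$\pi_i^p(x_i,x_{-i})=\frac{\gamma-1}{\gamma}\Big(\frac{\alpha_i h(x_i)}{V^*}\Big)^{1/\gamma}\Big[1-\rho\sum_{j=1}^n x_j\Big]\Big(1-\vartheta-\theta\frac{t}{n}x_i\Big).$$ Define $\tau_1=\frac{h'(0)}{\gamma}-\rho$ and $\tau_2=\Big[1+\Big(\frac{h'(1)}{\gamma\bar h}-\frac{\rho}{1-n\rho}\Big)^{-1}\Big]^{-1}$. Then $\tau_1>\tau_2>0$, and the sellers' equilibrium adulteration decisions are symmetric, $x_i^*=x^*$ for all $i$, where: (1) if $\theta\frac{t}{n}\ge\tau_1(1-\vartheta)$, then $x^*=0$; (2) if $\theta\frac{t}{n}\le\tau_2(1-\vartheta)$, then $x^*=1$; (3) otherwise $x^*=\hat x$, where $\hat x\in(0,1)$ is determined by the equation $$\Big(\frac{h'(x)}{\gamma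 h(x)}-\frac{\rho}{1-n\rho x}\Big)\Big(1-\vartheta-\theta\frac{t}{n}x\Big)=\theta\frac{t}{n}.$$
   Context: $\pi_i^p$ is seller $i$'s expected profit on an e-commerce platform under preemptive economically motivated adulteration (adulteration chosen before the common quality uncertainty is realized), after substituting equilibrium prices. $x_i$ is the amount of adulterant, $h$ the quality improvement it produces, $\rho$ consumers' quality consciousness, $\gamma$ price sensitivity, $V_0$ the outside option's quality-price ratio, $\vartheta$ the platform's take rate, $t$ the number of randomly inspected sellers, and $\theta$ the penalty intensity; $\theta t/n$ is the ''overall penalty risk''. *)

From Stdlib Require Import Reals Lra Lia List.
From Coquelicot Require Import Coquelicot.
Open Scope R_scope.

(* sum_{j=0}^{n-1} f j  (sellers are indexed 0..n-1) *)
Definition sumR (n : nat) (f : nat -> R) : R :=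
  fold_right Rplus 0 (map f (seq 0 n)).

Definition Vstar (n : nat) (gamma V0 : R) : R :=
  (gamma - 1) / (INR n - (INR n - 1) * gamma) * V0.

Definition risk (n : nat) (theta t : R) : R := theta * t / INR n.

Definition profit (n : nat) (gamma V0 rho theta t vt : R)
  (alpha : nat -> R) (h : R -> R) (x : nat -> R) (i : nat) : R :=
  (gamma - 1) / gamma
  * Rpower (alpha i * h (x i) / Vstar n gamma V0) (1 / gamma)
  * (1 - rho * sumR n x)
  * (1 - vt - risk n theta t * x i).

Definition upd (x : nat -> R) (i : nat) (y : R) : nat -> R :=
  fun j => if Nat.eqb j i then y else x j.

Definition is_equilibrium (n : nat) (gamma V0 rho theta t vt : R)
  (alpha : nat -> R) (h : R -> R) (x : nat -> R) : Prop :=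
  (forall i, (i < n)%nat -> 0 <= x i <= 1) /\
  (forall i y, (i < n)%nat -> 0 <= y <= 1 ->
     profit n gamma V0 rho theta t vt alpha h (upd x i y) i
     <= profit n gamma V0 rho theta t vt alpha h x i).

Definition tau1 (gamma rho : R) (h' : R -> R) : R := h' 0 / gamma - rho.

Definition tau2 (n : nat) (gamma rho hbar : R) (h' : R -> R) : R :=
  / (1 + / (h' 1 / (gamma * hbar) - rho / (1 - INR n * rho))).

Definition xhat_eq (n : nat) (gamma rho theta t vt : R) (h h' : R -> R) (x : R) : Prop :=
  (h' x / (gamma * h x) - rho / (1 - INR n * rho * x))
  * (1 - vt - risk n theta t * x) = risk n theta t.

Definition equilibria_are (n : nat) (gamma V0 rho theta t vt : R)
  (alpha : nat -> R) (h : R -> R) (xs : R) : Prop :=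
  forall x : nat -> R,
    is_equilibrium n gamma V0 rho theta t vt alpha h x <->
    (forall i, (i < n)%nat -> x i = xs).

From Stdlib Require Import Reals Lra Lia List.
From Coquelicot Require Import Coquelicot.
Open Scope R_scope.

(* While it is positive, seller i's profit is a constant times the exponential of
   (1/gamma) ln h(y) + ln (1 - rho S) + ln (1 - vt - r y) in its own decision y, where S is the
   total adulteration and r = theta t / n; this is concave in y, so a profile is an
   equilibrium exactly when every seller satisfies the first-order conditions on [0,1].
   The derivative h'(y)/(gamma h(y)) - rho/(1 - rho S) - r/(1 - vt - r y) decreases in y
   (h is concave and increasing) and strictly in S.  Hence, when r > 0, two sellers cannot
   choose different levels, and along the diagonal S = n y the derivative is strictly
   decreasing; its value at y = 0 is tau1 - r/(1 - vt) and at y = 1 it is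
   gain1 - r/(1 - vt - r), where gain1 = h'(1)/(gamma hbar) - rho/(1 - n rho) satisfies
   tau2 = gain1/(gain1 + 1).  This selects x* = 0, x* = 1 or the unique
   interior root.  The qualities alpha_i only scale the profits. *)

Lemma sumR_S n f : sumR (S n) f = sumR n f + f n.
Proof.
  unfold sumR. rewrite seq_S, map_app, fold_right_app; simpl.
  induction (map f (seq 0 n)) as [|a l IH]; simpl; lra.
Qed.

Lemma sumR_ext n f g : (forall j, (j < n)%nat -> f j = g j) -> sumR n f = sumR n g.
Proof.
  induction n as [|n IH]; intros Hfg; [reflexivity|].
  rewrite !sumR_S, (Hfg n) by lia.
  rewrite IH; [reflexivity|]. intros j Hj. apply Hfg. lia.
Qed.

Lemma upd_same x i y : upd x i y i = y.
Proof. unfold upd. now rewrite Nat.eqb_refl. Qed.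

Lemma upd_unit n x i y :
  (forall j, (j < n)%nat -> 0 <= x j <= 1) -> 0 <= y <= 1 ->
  forall j, (j < n)%nat -> 0 <= upd x i y j <= 1.
Proof. intros Hx Hy j Hj. unfold upd. destruct (Nat.eqb j i); auto. Qed.

Lemma sumR_upd n x i y : (i < n)%nat -> sumR n (upd x i y) = sumR n x - x i + y.
Proof.
  induction n as [|n IH]; intros Hi; [lia|].
  rewrite !sumR_S. destruct (Nat.eq_dec i n) as [->|Hne].
  - rewrite upd_same, (sumR_ext n (upd x n y) x); [lra|].
    intros j Hj. unfold upd. destruct (Nat.eqb_spec j n); [lia|reflexivity].
  - rewrite IH by lia. unfold upd. destruct (Nat.eqb_spec n i); [lia|lra].
Qed.

Lemma sumR_const n x z : (forall j, (j < n)%nat -> x j = z) -> sumR n x = INR n * z.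
Proof.
  induction n as [|n IH]; intros Hx; [unfold sumR; simpl; lra|].
  rewrite sumR_S, S_INR, (Hx n) by lia.
  rewrite IH; [lra|]. intros j Hj. apply Hx. lia.
Qed.

Lemma sumR_bounds n x : (forall j, (j < n)%nat -> 0 <= x j <= 1) -> 0 <= sumR n x <= INR n.
Proof.
  induction n as [|n IH]; intros Hx; [unfold sumR; simpl; lra|].
  rewrite sumR_S, S_INR.
  specialize (IH (fun j Hj => Hx j ltac:(lia))). specialize (Hx n ltac:(lia)). lra.
Qed.

Lemma sumR_lt n x i : (forall j, (j < n)%nat -> 0 <= x j <= 1) -> (i < n)%nat -> x i < 1 ->
  sumR n x < INR n.
Proof.
  intros Hx Hi Hxi.
  pose proof (sumR_bounds n _ (upd_unit n x i 1 Hx ltac:(lra))) as Hb.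
  rewrite sumR_upd in Hb by assumption. lra.
Qed.

Lemma le_sumR n x i : (forall j, (j < n)%nat -> 0 <= x j <= 1) -> (i < n)%nat -> x i <= sumR n x.
Proof.
  intros Hx Hi.
  pose proof (sumR_bounds n _ (upd_unit n x i 0 Hx ltac:(lra))) as Hb.
  rewrite sumR_upd in Hb by assumption. lra.
Qed.

Lemma ln_sub_le p q : 0 < p -> 0 < q -> ln p - ln q <= (p - q) / q.
Proof.
  intros Hp Hq. rewrite <- ln_div by assumption.
  pose proof (exp_ineq1_le (ln (p / q))) as H.
  rewrite exp_ln in H by (apply Rdiv_lt_0_compat; assumption).
  replace ((p - q) / q) with (p / q - 1) by (field; lra). lra.
Qed.

Lemma exp_le_compat x y : x <= y -> exp x <= exp y.
Proof.
  intros [Hlt|Heq]; [left; apply exp_increasing, Hlt | right; rewrite Heq; reflexivity].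
Qed.

Lemma derive_step_increase f c l : derivable_pt_lim f c l ->
  exists d, 0 < d /\ forall s, Rabs s < d -> 0 < s * l -> f c < f (c + s).
Proof.
  intros Hf. destruct (Req_dec l 0) as [->|Hl].
  - exists 1. split; [lra|]. intros s _ Hs. lra.
  - destruct (Hf (Rabs l) (Rabs_pos_lt l Hl)) as [d Hd].
    exists d. split; [apply cond_pos|]. intros s Hs Hsl.
    assert (Hs0 : s <> 0) by (intros ->; lra).
    specialize (Hd s Hs0 Hs).
    set (q := (f (c + s) - f c) / s) in Hd.
    assert (Hql : 0 < q * l).
    { apply Rabs_def2 in Hd.
      destruct (Rle_or_lt 0 l); [rewrite Rabs_right in Hd | rewrite Rabs_left in Hd]; nra. }
    assert (Hq : f (c + s) - f c = q * s) by (unfold q; field; assumption).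
    nra.
Qed.

Lemma Rmin_half_pos d e : 0 < d -> 0 < e -> 0 < Rmin d e / 2 < d /\ Rmin d e / 2 < e.
Proof.
  intros Hd He. pose proof (Rmin_l d e). pose proof (Rmin_r d e).
  assert (0 < Rmin d e) by (apply Rmin_glb_lt; assumption). lra.
Qed.

Lemma derive_nonpos_of_right_max f c l d : derivable_pt_lim f c l -> 0 < d ->
  (forall s, 0 < s < d -> f (c + s) <= f c) -> l <= 0.
Proof.
  intros Hf Hd Hmax. apply Rnot_lt_le. intros Hl.
  destruct (derive_step_increase f c l Hf) as [e [He Hstep]].
  destruct (Rmin_half_pos d e Hd He) as [Hsd Hse].
  specialize (Hmax _ Hsd). specialize (Hstep (Rmin d e / 2)).
  rewrite Rabs_right in Hstep by lra.
  specialize (Hstep Hse ltac:(nra)). lra.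
Qed.

Lemma derive_nonneg_of_left_max f c l d : derivable_pt_lim f c l -> 0 < d ->
  (forall s, 0 < s < d -> f (c - s) <= f c) -> 0 <= l.
Proof.
  intros Hf Hd Hmax. apply Rnot_lt_le. intros Hl.
  destruct (derive_step_increase f c l Hf) as [e [He Hstep]].
  destruct (Rmin_half_pos d e Hd He) as [Hsd Hse].
  specialize (Hmax _ Hsd). specialize (Hstep (- (Rmin d e / 2))).
  rewrite Rabs_Ropp, Rabs_right in Hstep by lra.
  specialize (Hstep Hse ltac:(nra)). unfold Rminus in Hmax. lra.
Qed.

Lemma derive_root f g a b : a < b ->
  (forall c, a <= c <= b -> derivable_pt_lim f c (g c)) -> 0 < g a -> g b < 0 ->
  exists c, a < c < b /\ g c = 0.
Proof.
  intros Hab Hf Ha Hb.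
  destruct (continuity_ab_maj f a b) as [M [HM [HaM HMb]]]; [lra| |].
  { intros c Hc. apply derivable_continuous_pt. exists (g c). exact (Hf c Hc). }
  assert (Hright : M < b -> g M <= 0).
  { intros HMb'. apply (derive_nonpos_of_right_max f M (g M) (b - M)); [apply Hf; lra|lra|].
    intros s Hs. apply HM. lra. }
  assert (Hleft : a < M -> 0 <= g M).
  { intros HaM'. apply (derive_nonneg_of_left_max f M (g M) (M - a)); [apply Hf; lra|lra|].
    intros s Hs. apply HM. lra. }
  assert (HaM' : a < M).
  { destruct HaM as [|HaM]; [assumption|]. subst M. specialize (Hright Hab). lra. }
  assert (HMb' : M < b).
  { destruct HMb as [|HMb]; [assumption|]. subst M. specialize (Hleft Hab). lra. }
  exists M. split; [lra|]. specialize (Hright HMb'). specialize (Hleft HaM'). lra.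
Qed.

Definition log_payoff (a b u v w z : R) (h : R -> R) (y : R) : R :=
  a * ln (h y) + b * ln (u + v * y) + ln (w + z * y).

Section ConcaveDerivative.

Variables h h' : R -> R.
Hypothesis Hderiv : forall x, 0 <= x <= 1 -> is_derive h x (h' x).
Hypothesis Hconc : forall x y l, 0 <= x <= 1 -> 0 <= y <= 1 -> 0 <= l <= 1 ->
  l * h x + (1 - l) * h y <= h (l * x + (1 - l) * y).

Lemma concave_tangent_le x y : 0 <= x <= 1 -> 0 <= y <= 1 -> h y <= h x + h' x * (y - x).
Proof.
  intros Hx Hy.
  (* By concavity [f] is maximal at [0] on [[0, 1]], so [f'(0) <= 0]. *)
  set (f := fun l => l * (h y - h x) - h (x + l * (y - x))).
  assert (Hf : is_derive f 0 ((h y - h x) - (y - x) * h' x)).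
  { apply (is_derive_minus (fun l => l * (h y - h x)) (fun l => h (x + l * (y - x)))).
    - auto_derive; [exact I|ring].
    - apply (is_derive_comp h (fun l => x + l * (y - x))).
      + replace (x + 0 * (y - x)) with x by ring. apply Hderiv, Hx.
      + auto_derive; [exact I|ring]. }
  apply is_derive_Reals in Hf.
  enough (h y - h x - (y - x) * h' x <= 0) by lra.
  apply (derive_nonpos_of_right_max f 0 _ 1 Hf); [lra|].
  intros s Hs. unfold f. rewrite Rplus_0_l.
  pose proof (Hconc y x s Hy Hx ltac:(lra)).
  replace (x + s * (y - x)) with (s * y + (1 - s) * x) by ring.
  replace (x + 0 * (y - x)) with x by ring. lra.
Qed.

Lemma concave_deriv_antitone x y : 0 <= x -> x <= y -> y <= 1 -> h' y <= h' x.
Proof.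
  intros Hx Hxy Hy.
  pose proof (concave_tangent_le x y ltac:(lra) ltac:(lra)).
  pose proof (concave_tangent_le y x ltac:(lra) ltac:(lra)).
  destruct Hxy as [Hxy| ->]; [nra|lra].
Qed.

Lemma log_payoff_derive a b u v w z c : 0 <= c <= 1 -> 0 < h c ->
  0 < u + v * c -> 0 < w + z * c ->
  derivable_pt_lim (log_payoff a b u v w z h) c
    (a * (h' c / h c) + b * (v / (u + v * c)) + z / (w + z * c)).
Proof.
  intros Hc Hh Hu Hw. apply is_derive_Reals. unfold log_payoff.
  assert (Hlin : forall p q, 0 < p + q * c ->
            is_derive (fun y => ln (p + q * y)) c (q / (p + q * c))).
  { intros p q Hpq. apply (is_derive_comp ln (fun y => p + q * y) c _ q (is_derive_ln _ Hpq)).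
    auto_derive; [exact I|ring]. }
  apply (is_derive_plus (fun y => a * ln (h y) + b * ln (u + v * y))); [|apply Hlin, Hw].
  apply (is_derive_plus (fun y => a * ln (h y))); apply is_derive_scal; [|apply Hlin, Hu].
  exact (is_derive_comp ln h c _ _ (is_derive_ln _ Hh) (Hderiv c Hc)).
Qed.

Lemma log_payoff_tangent_le a b u v w z x y : 0 <= x <= 1 -> 0 <= y <= 1 ->
  0 < h x -> 0 < h y -> 0 <= a -> 0 <= b ->
  0 < u + v * x -> 0 < u + v * y -> 0 < w + z * x -> 0 < w + z * y ->
  log_payoff a b u v w z h y - log_payoff a b u v w z h x <=
  (a * (h' x / h x) + b * (v / (u + v * x)) + z / (w + z * x)) * (y - x).
Proof.
  intros Hx Hy Hhx Hhy Ha Hb Hux Huy Hwx Hwy. unfold log_payoff.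
  pose proof (ln_sub_le _ _ Hhy Hhx) as Lh.
  pose proof (ln_sub_le _ _ Huy Hux) as Lu.
  pose proof (ln_sub_le _ _ Hwy Hwx) as Lw.
  assert (Th : (h y - h x) / h x <= h' x / h x * (y - x)).
  { pose proof (concave_tangent_le x y Hx Hy).
    unfold Rdiv. rewrite Rmult_comm, (Rmult_comm (h' x)), Rmult_assoc.
    apply Rmult_le_compat_l; [left; apply Rinv_0_lt_compat|]; lra. }
  replace ((u + v * y - (u + v * x)) / (u + v * x)) with (v / (u + v * x) * (y - x)) in Lu
    by (field; lra).
  replace ((w + z * y - (w + z * x)) / (w + z * x)) with (z / (w + z * x) * (y - x)) in Lw
    by (field; lra).
  pose proof (Rmult_le_compat_l a _ _ Ha (Rle_trans _ _ _ Lh Th)).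
  pose proof (Rmult_le_compat_l b _ _ Hb Lu).
  nra.
Qed.

Hypothesis Hincr : forall x y, 0 <= x -> x < y -> y <= 1 -> h x < h y.
Hypothesis Hpos : forall x, 0 <= x <= 1 -> 0 < h x.

Lemma concave_deriv_pos x : 0 <= x < 1 -> 0 < h' x.
Proof.
  intros Hx. pose proof (concave_tangent_le x 1 ltac:(lra) ltac:(lra)).
  pose proof (Hincr x 1 ltac:(lra) ltac:(lra) ltac:(lra)). nra.
Qed.

Lemma log_deriv_antitone x y : 0 <= x -> x <= y -> y <= 1 -> h' y / h y <= h' x / h x.
Proof.
  intros Hx Hxy Hy. destruct Hxy as [Hxy| <-]; [|lra].
  pose proof (concave_deriv_pos x ltac:(lra)) as Hdx.
  pose proof (Hincr x y Hx Hxy Hy) as Hh.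
  pose proof (Hpos x ltac:(lra)). pose proof (Hpos y ltac:(lra)).
  destruct (Rle_or_lt (h' y) 0) as [Hdy|Hdy].
  - assert (h' y / h y <= 0).
    { unfold Rdiv. pose proof (Rinv_0_lt_compat (h y) ltac:(lra)). nra. }
    assert (0 < h' x / h x) by (apply Rdiv_lt_0_compat; lra). lra.
  - apply Rle_trans with (h' x / h y).
    + unfold Rdiv. apply Rmult_le_compat_r; [left; apply Rinv_0_lt_compat; lra|].
      apply concave_deriv_antitone; lra.
    + unfold Rdiv. apply Rmult_le_compat_l; [lra|]. apply Rinv_le_contravar; lra.
Qed.

End ConcaveDerivative.

Lemma div_sub_le a c s s' : 0 <= a -> s <= s' -> 0 < c - a * s' ->
  a / (c - a * s) <= a / (c - a * s').
Proof.
  intros Ha Hs Hc. assert (a * s <= a * s') by (apply Rmult_le_compat_l; assumption).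
  unfold Rdiv. apply Rmult_le_compat_l; [assumption|].
  apply Rinv_le_contravar; lra.
Qed.

Lemma div_sub_lt a c s s' : 0 < a -> s < s' -> 0 < c - a * s' ->
  a / (c - a * s) < a / (c - a * s').
Proof.
  intros Ha Hs Hc. assert (a * s < a * s') by (apply Rmult_lt_compat_l; assumption).
  unfold Rdiv. apply Rmult_lt_compat_l; [assumption|].
  apply Rinv_lt_contravar; [apply Rmult_lt_0_compat|]; lra.
Qed.

Lemma div_sub_le_iff a w r : 0 < a -> 0 <= r -> r < w ->
  (r / (w - r) <= a <-> r <= a / (a + 1) * w).
Proof.
  intros Ha Hr Hw. rewrite Rle_div_l by lra.
  replace (a / (a + 1) * w) with (a * w / (a + 1)) by (field; lra).
  rewrite <- Rle_div_r by lra. split; intros; lra.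
Qed.

Lemma Vstar_pos n gamma V0 : 1 < gamma -> 0 < V0 -> INR n * ((gamma - 1) / gamma) < 1 ->
  0 < Vstar n gamma V0.
Proof.
  intros Hg HV0 Hcond. unfold Vstar.
  assert (INR n * (gamma - 1) < gamma).
  { apply (Rmult_lt_compat_r gamma) in Hcond; [|lra].
    replace (INR n * ((gamma - 1) / gamma) * gamma) with (INR n * (gamma - 1)) in Hcond
      by (field; lra).
    lra. }
  apply Rmult_lt_0_compat; [apply Rdiv_lt_0_compat|]; lra.
Qed.

Section Game.

Variables (n : nat) (gamma V0 rho theta t vt hbar : R) (alpha : nat -> R) (h h' : R -> R).

Hypothesis Hn : (1 <= n)%nat.
Hypothesis Hgamma : 1 < gamma.
Hypothesis HV : 0 < Vstar n gamma V0.
Hypothesis Halpha_pos : forall i, (i < n)%nat -> 0 < alpha i.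
Hypothesis Hderiv : forall x, 0 <= x <= 1 -> is_derive h x (h' x).
Hypothesis Hincr : forall x y, 0 <= x -> x < y -> y <= 1 -> h x < h y.
Hypothesis Hconc : forall x y l, 0 <= x <= 1 -> 0 <= y <= 1 -> 0 <= l <= 1 ->
  l * h x + (1 - l) * h y <= h (l * x + (1 - l) * y).
Hypothesis Hrange : forall x, 0 <= x <= 1 -> 1 <= h x.
Hypothesis Hrho : 0 < rho.
Hypothesis Hnrho : INR n * rho < 1.
Hypothesis Hrisk : 0 <= risk n theta t.
Hypothesis Hvt : vt < 1.

Local Notation r := (risk n theta t).
Local Notation pi := (profit n gamma V0 rho theta t vt alpha h).
Local Notation equilibrium := (is_equilibrium n gamma V0 rho theta t vt alpha h).
Local Notation unit_profile x := (forall j, (j < n)%nat -> 0 <= x j <= 1).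

Lemma n_ge_1 : 1 <= INR n.
Proof. apply (le_INR 1 n), Hn. Qed.

Lemma h_pos x : 0 <= x <= 1 -> 0 < h x.
Proof. intros Hx. specialize (Hrange x Hx). lra. Qed.

Lemma demand_factor_pos S : S <= INR n -> 0 < 1 - rho * S.
Proof. intros HS. nra. Qed.

Definition profit_scale (i : nat) : R :=
  (gamma - 1) / gamma * exp (1 / gamma * ln (alpha i / Vstar n gamma V0)).

Definition own_log_payoff (x : nat -> R) (i : nat) : R -> R :=
  log_payoff (1 / gamma) 1 (1 - rho * (sumR n x - x i)) (- rho) (1 - vt) (- r) h.

(* The derivative of [own_log_payoff x i] at [x i] when the total adulteration is [S]. *)
Definition dlog_profit (y S : R) : R :=
  h' y / (gamma * h y) - rho / (1 - rho * S) - r / (1 - vt - r * y).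

Definition foc (y S : R) : Prop :=
  0 < 1 - vt - r * y /\ (y < 1 -> dlog_profit y S <= 0) /\ (0 < y -> 0 <= dlog_profit y S).

Lemma profit_scale_pos i : 0 < profit_scale i.
Proof.
  apply Rmult_lt_0_compat; [apply Rdiv_lt_0_compat; lra | apply exp_pos].
Qed.

Lemma profit_nonpos x i : 0 <= 1 - rho * sumR n x -> 1 - vt - r * x i <= 0 -> pi x i <= 0.
Proof.
  intros HS Hm. unfold profit, Rpower.
  assert (0 < (gamma - 1) / gamma) by (apply Rdiv_lt_0_compat; lra).
  pose proof (exp_pos (1 / gamma * ln (alpha i * h (x i) / Vstar n gamma V0))).
  assert (0 <= (gamma - 1) / gamma * exp (1 / gamma * ln (alpha i * h (x i) / Vstar n gamma V0))
               * (1 - rho * sumR n x)) by (apply Rmult_le_pos; [apply Rmult_le_pos|]; lra).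
  nra.
Qed.

Lemma profit_pos x i : 0 < 1 - rho * sumR n x -> 0 < 1 - vt - r * x i -> 0 < pi x i.
Proof.
  intros HS Hm. unfold profit, Rpower.
  assert (0 < (gamma - 1) / gamma) by (apply Rdiv_lt_0_compat; lra).
  pose proof (exp_pos (1 / gamma * ln (alpha i * h (x i) / Vstar n gamma V0))).
  apply Rmult_lt_0_compat; [apply Rmult_lt_0_compat; [apply Rmult_lt_0_compat|]|]; assumption.
Qed.

Lemma profit_exp x i : (i < n)%nat -> unit_profile x -> 0 < 1 - vt - r * x i ->
  pi x i = profit_scale i * exp (own_log_payoff x i (x i)).
Proof.
  intros Hi Hx Hm.
  pose proof (h_pos (x i) (Hx i Hi)). pose proof (Halpha_pos i Hi).
  pose proof (demand_factor_pos (sumR n x) (proj2 (sumR_bounds n x Hx))).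
  unfold profit, profit_scale, own_log_payoff, log_payoff, Rpower.
  replace (alpha i * h (x i) / Vstar n gamma V0) with (alpha i / Vstar n gamma V0 * h (x i))
    by (field; lra).
  rewrite ln_mult by (try apply Rdiv_lt_0_compat; assumption).
  replace (1 - rho * (sumR n x - x i) + - rho * x i) with (1 - rho * sumR n x) by ring.
  replace (1 - vt + - r * x i) with (1 - vt - r * x i) by ring.
  rewrite Rmult_1_l, Rmult_plus_distr_l, !exp_plus, !exp_ln by assumption. ring.
Qed.

Lemma own_log_payoff_upd x i y : (i < n)%nat -> own_log_payoff (upd x i y) i = own_log_payoff x i.
Proof.
  intros Hi. unfold own_log_payoff. rewrite sumR_upd, upd_same by assumption.
  replace (sumR n x - x i + y - y) with (sumR n x - x i) by ring. reflexivity.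
Qed.

Lemma profit_upd_exp x i y : (i < n)%nat -> unit_profile x -> 0 <= y <= 1 ->
  0 < 1 - vt - r * y -> pi (upd x i y) i = profit_scale i * exp (own_log_payoff x i y).
Proof.
  intros Hi Hx Hy Hm.
  rewrite profit_exp.
  - rewrite own_log_payoff_upd, upd_same by assumption. reflexivity.
  - assumption.
  - apply upd_unit; assumption.
  - rewrite upd_same. assumption.
Qed.

Lemma dlog_profit_expand x i : (i < n)%nat -> unit_profile x -> 0 < 1 - vt - r * x i ->
  1 / gamma * (h' (x i) / h (x i)) + 1 * (- rho / (1 - rho * (sumR n x - x i) + - rho * x i))
  + - r / (1 - vt + - r * x i) = dlog_profit (x i) (sumR n x).
Proof.
  intros Hi Hx Hm. pose proof (h_pos (x i) (Hx i Hi)).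
  pose proof (demand_factor_pos (sumR n x) (proj2 (sumR_bounds n x Hx))).
  unfold dlog_profit.
  replace (1 - rho * (sumR n x - x i) + - rho * x i) with (1 - rho * sumR n x) by ring.
  replace (1 - vt + - r * x i) with (1 - vt - r * x i) by ring.
  field. repeat split; lra.
Qed.

Lemma own_log_payoff_derive x i : (i < n)%nat -> unit_profile x -> 0 < 1 - vt - r * x i ->
  derivable_pt_lim (own_log_payoff x i) (x i) (dlog_profit (x i) (sumR n x)).
Proof.
  intros Hi Hx Hm. pose proof (Hx i Hi).
  pose proof (demand_factor_pos (sumR n x) (proj2 (sumR_bounds n x Hx))).
  rewrite <- dlog_profit_expand by assumption.
  apply log_payoff_derive; [assumption | assumption | apply h_pos; assumption | |]; lra.
Qed.

Lemma own_log_payoff_tangent_le x i y : (i < n)%nat -> unit_profile x -> 0 <= y <= 1 ->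
  0 < 1 - vt - r * x i -> 0 < 1 - vt - r * y ->
  own_log_payoff x i y - own_log_payoff x i (x i) <= dlog_profit (x i) (sumR n x) * (y - x i).
Proof.
  intros Hi Hx Hy Hm Hmy. pose proof (Hx i Hi).
  pose proof (demand_factor_pos (sumR n x) (proj2 (sumR_bounds n x Hx))).
  pose proof (demand_factor_pos _ (proj2 (sumR_bounds n _ (upd_unit n x i y Hx Hy)))).
  rewrite sumR_upd in * by assumption.
  rewrite <- dlog_profit_expand by assumption.
  apply log_payoff_tangent_le; try assumption; try (apply h_pos; assumption).
  all: try lra. left. apply Rdiv_lt_0_compat; lra.
Qed.

Lemma equilibrium_margin_pos x i : equilibrium x -> (i < n)%nat -> 0 < 1 - vt - r * x i.
Proof.
  intros [Hx Hbest] Hi. apply Rnot_le_lt. intros Hm.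
  pose proof (Hbest i 0 Hi ltac:(lra)) as Hdev.
  pose proof (profit_nonpos x i
    (Rlt_le _ _ (demand_factor_pos _ (proj2 (sumR_bounds n x Hx)))) Hm).
  pose proof (profit_pos (upd x i 0) i
    (demand_factor_pos _ (proj2 (sumR_bounds n _ (upd_unit n x i 0 Hx ltac:(lra)))))
    ltac:(rewrite upd_same; lra)).
  lra.
Qed.

Lemma equilibrium_own_max x i y : equilibrium x -> (i < n)%nat -> 0 <= y <= 1 ->
  0 < 1 - vt - r * y -> own_log_payoff x i y <= own_log_payoff x i (x i).
Proof.
  intros Heq Hi Hy Hm. pose proof (equilibrium_margin_pos x i Heq Hi).
  destruct Heq as [Hx Hbest]. specialize (Hbest i y Hi Hy).
  rewrite profit_upd_exp, profit_exp in Hbest by assumption.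
  pose proof (profit_scale_pos i).
  apply Rnot_lt_le. intros Hlt. apply exp_increasing in Hlt. nra.
Qed.

Lemma equilibrium_foc x i : equilibrium x -> (i < n)%nat ->
  foc (x i) (sumR n x).
Proof.
  intros Heq Hi. pose proof (equilibrium_margin_pos x i Heq Hi) as Hm.
  pose proof (Hx := proj1 Heq i Hi).
  pose proof (own_log_payoff_derive x i Hi (proj1 Heq) Hm) as Hd.
  split; [exact Hm | split].
  - intros Hlt. set (d := Rmin (1 - x i) ((1 - vt - r * x i) / (r + 1))).
    assert (Hd1 : d <= 1 - x i) by apply Rmin_l.
    assert (Hd2 : d * (r + 1) <= 1 - vt - r * x i).
    { apply Rle_div_r; [lra | apply Rmin_r]. }
    apply (derive_nonpos_of_right_max _ _ _ d Hd).
    + apply Rmin_glb_lt; [lra | apply Rdiv_lt_0_compat; lra].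
    + intros s Hs. apply equilibrium_own_max; [exact Heq | exact Hi | lra | nra].
  - intros Hpos. apply (derive_nonneg_of_left_max _ _ _ (x i) Hd Hpos).
    intros s Hs. apply equilibrium_own_max; [exact Heq | exact Hi | lra | nra].
Qed.

Lemma equilibrium_of_foc x : unit_profile x ->
  (forall i, (i < n)%nat -> foc (x i) (sumR n x)) -> equilibrium x.
Proof.
  intros Hx Hfoc. split; [exact Hx|]. intros i y Hi Hy.
  destruct (Hfoc i Hi) as [Hm [Hlt Hgt]].
  pose proof (demand_factor_pos _ (proj2 (sumR_bounds n x Hx))).
  destruct (Rle_or_lt (1 - vt - r * y) 0) as [Hmy|Hmy].
  - pose proof (profit_pos x i ltac:(assumption) Hm).
    pose proof (profit_nonpos (upd x i y) i
      (Rlt_le _ _ (demand_factor_pos _ (proj2 (sumR_bounds n _ (upd_unit n x i y Hx Hy)))))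
      ltac:(rewrite upd_same; assumption)).
    lra.
  - rewrite profit_upd_exp, profit_exp by assumption.
    pose proof (own_log_payoff_tangent_le x i y Hi Hx Hy Hm Hmy).
    pose proof (Hx i Hi).
    assert (dlog_profit (x i) (sumR n x) * (y - x i) <= 0).
    { destruct (Rtotal_order y (x i)) as [Hyx|[Hyx|Hyx]].
      - specialize (Hgt ltac:(lra)). nra.
      - rewrite Hyx. lra.
      - specialize (Hlt ltac:(lra)). nra. }
    apply Rmult_le_compat_l; [left; apply profit_scale_pos|].
    apply exp_le_compat. lra.
Qed.

Lemma equilibria_are_intro z : 0 <= z <= 1 -> foc z (INR n * z) ->
  (forall x, unit_profile x ->
     (forall i, (i < n)%nat -> foc (x i) (sumR n x)) ->
     forall i, (i < n)%nat -> x i = z) ->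
  equilibria_are n gamma V0 rho theta t vt alpha h z.
Proof.
  intros Hz Hfoc Honly x. split.
  - intros Heq. apply Honly; [exact (proj1 Heq)|]. intros i Hi. exact (equilibrium_foc x i Heq Hi).
  - intros Hxz. apply equilibrium_of_foc.
    + intros j Hj. rewrite Hxz; assumption.
    + intros i Hi. rewrite Hxz, (sumR_const n x z Hxz); assumption.
Qed.

Lemma marginal_quality_antitone y y' : 0 <= y -> y <= y' -> y' <= 1 ->
  h' y' / (gamma * h y') <= h' y / (gamma * h y).
Proof.
  intros Hy Hyy' Hy'. pose proof (h_pos y ltac:(lra)). pose proof (h_pos y' ltac:(lra)).
  replace (h' y' / (gamma * h y')) with (/ gamma * (h' y' / h y')) by (field; lra).
  replace (h' y / (gamma * h y)) with (/ gamma * (h' y / h y)) by (field; lra).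
  apply Rmult_le_compat_l; [left; apply Rinv_0_lt_compat; lra|].
  apply (log_deriv_antitone h h'); try assumption. exact h_pos.
Qed.

Lemma dlog_profit_lt y y' S S' : 0 <= y -> y <= y' -> y' <= 1 -> S <= S' -> S' <= INR n ->
  0 < 1 - vt - r * y' -> S < S' \/ (0 < r /\ y < y') -> dlog_profit y' S' < dlog_profit y S.
Proof.
  intros Hy Hyy' Hy' HSS' HS' Hm Hstrict. unfold dlog_profit.
  pose proof (marginal_quality_antitone y y' Hy Hyy' Hy').
  pose proof (demand_factor_pos S' HS').
  destruct Hstrict as [HS|[Hr Hyy]].
  - pose proof (div_sub_lt rho 1 S S' Hrho HS ltac:(lra)).
    pose proof (div_sub_le r (1 - vt) y y' Hrisk Hyy' Hm). lra.
  - pose proof (div_sub_le rho 1 S S' (Rlt_le _ _ Hrho) HSS' ltac:(lra)).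
    pose proof (div_sub_lt r (1 - vt) y y' Hr Hyy Hm). lra.
Qed.

Lemma dlog_profit_diag_lt z z' : 0 <= z -> z < z' -> z' <= 1 -> 0 < 1 - vt - r * z' ->
  dlog_profit z' (INR n * z') < dlog_profit z (INR n * z).
Proof.
  intros Hz Hzz' Hz' Hm. pose proof n_ge_1.
  apply dlog_profit_lt; try lra; [nra | nra | left; nra].
Qed.

Lemma dlog_profit_diag_root_unique z z' : 0 <= z <= 1 -> 0 <= z' <= 1 ->
  0 < 1 - vt - r * z -> 0 < 1 - vt - r * z' ->
  dlog_profit z (INR n * z) = 0 -> dlog_profit z' (INR n * z') = 0 -> z = z'.
Proof.
  intros Hz Hz' Hm Hm' HD HD'.
  destruct (Rtotal_order z z') as [Hlt|[Heq|Hlt]]; [exfalso| exact Heq |exfalso].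
  - pose proof (dlog_profit_diag_lt z z' ltac:(lra) Hlt ltac:(lra) Hm'). lra.
  - pose proof (dlog_profit_diag_lt z' z ltac:(lra) Hlt ltac:(lra) Hm). lra.
Qed.

Lemma foc_only_zero x : dlog_profit 0 0 <= 0 -> unit_profile x ->
  (forall i, (i < n)%nat -> foc (x i) (sumR n x)) ->
  forall i, (i < n)%nat -> x i = 0.
Proof.
  intros H0 Hx Hfoc i Hi. pose proof (Hx i Hi).
  destruct (Req_dec (x i) 0) as [|Hne]; [assumption | exfalso].
  destruct (Hfoc i Hi) as [Hm [_ Hgt]]. specialize (Hgt ltac:(lra)).
  pose proof (le_sumR n x i Hx Hi). pose proof (sumR_bounds n x Hx).
  pose proof (dlog_profit_lt 0 (x i) 0 (sumR n x) ltac:(lra) ltac:(lra) ltac:(lra) ltac:(lra)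
    ltac:(lra) Hm ltac:(left; lra)).
  lra.
Qed.

Lemma foc_only_one x : 0 < 1 - vt - r -> 0 <= dlog_profit 1 (INR n) -> unit_profile x ->
  (forall i, (i < n)%nat -> foc (x i) (sumR n x)) ->
  forall i, (i < n)%nat -> x i = 1.
Proof.
  intros Hm1 H1 Hx Hfoc i Hi. pose proof (Hx i Hi).
  destruct (Req_dec (x i) 1) as [|Hne]; [assumption | exfalso].
  destruct (Hfoc i Hi) as [_ [Hlt _]]. specialize (Hlt ltac:(lra)).
  pose proof (sumR_lt n x i Hx Hi ltac:(lra)). pose proof (sumR_bounds n x Hx).
  pose proof (dlog_profit_lt (x i) 1 (sumR n x) (INR n) ltac:(lra) ltac:(lra) ltac:(lra)
    ltac:(lra) ltac:(lra) ltac:(lra) ltac:(left; lra)).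
  lra.
Qed.

Lemma foc_symmetric x : 0 < r -> unit_profile x ->
  (forall i, (i < n)%nat -> foc (x i) (sumR n x)) ->
  forall i j, (i < n)%nat -> (j < n)%nat -> x i = x j.
Proof.
  intros Hr Hx Hfoc.
  assert (Hnot_lt : forall i j, (i < n)%nat -> (j < n)%nat -> ~ x i < x j).
  { intros i j Hi Hj Hij.
    pose proof (Hx i Hi). pose proof (Hx j Hj). pose proof (sumR_bounds n x Hx).
    destruct (Hfoc i Hi) as [_ [Hlt _]]. destruct (Hfoc j Hj) as [Hmj [_ Hgt]].
    specialize (Hlt ltac:(lra)). specialize (Hgt ltac:(lra)).
    pose proof (dlog_profit_lt (x i) (x j) (sumR n x) (sumR n x) ltac:(lra) ltac:(lra)
      ltac:(lra) ltac:(lra) ltac:(lra) Hmj ltac:(right; lra)).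
    lra. }
  intros i j Hi Hj.
  destruct (Rtotal_order (x i) (x j)) as [Hlt|[Heq|Hlt]]; [exfalso | exact Heq | exfalso].
  - exact (Hnot_lt i j Hi Hj Hlt).
  - exact (Hnot_lt j i Hj Hi Hlt).
Qed.

Lemma foc_only_root x M : 0 < r -> 0 < dlog_profit 0 0 ->
  (0 < 1 - vt - r -> dlog_profit 1 (INR n) < 0) ->
  0 <= M <= 1 -> 0 < 1 - vt - r * M -> dlog_profit M (INR n * M) = 0 ->
  unit_profile x -> (forall i, (i < n)%nat -> foc (x i) (sumR n x)) ->
  forall i, (i < n)%nat -> x i = M.
Proof.
  intros Hr H0 H1 HM HmM HDM Hx Hfoc i Hi.
  assert (H0n : (0 < n)%nat) by lia.
  set (z := x 0%nat).
  assert (Hall : forall j, (j < n)%nat -> x j = z)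
    by (intros j Hj; exact (foc_symmetric x Hr Hx Hfoc j 0%nat Hj H0n)).
  rewrite (Hall i Hi).
  pose proof (Hx 0%nat H0n) as Hz. fold z in Hz.
  destruct (Hfoc 0%nat H0n) as [Hm [Hlt Hgt]]. fold z in Hm, Hlt, Hgt.
  rewrite (sumR_const n x z Hall) in Hlt, Hgt.
  destruct (Req_dec z 0) as [Hz0|Hz0].
  - rewrite Hz0, Rmult_0_r in Hlt. specialize (Hlt ltac:(lra)). lra.
  - destruct (Req_dec z 1) as [Hz1|Hz1].
    + rewrite Hz1, Rmult_1_r in Hgt. rewrite Hz1 in Hm.
      specialize (Hgt ltac:(lra)). specialize (H1 ltac:(lra)). lra.
    + specialize (Hlt ltac:(lra)). specialize (Hgt ltac:(lra)).
      apply dlog_profit_diag_root_unique; lra.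
Qed.

Lemma dlog_profit_diag_neg : 0 < r -> 0 < dlog_profit 0 0 ->
  (0 < 1 - vt - r -> dlog_profit 1 (INR n) < 0) ->
  exists b, 0 < b <= 1 /\ 0 < 1 - vt - r * b /\ dlog_profit b (INR n * b) < 0.
Proof.
  intros Hr H0 H1.
  destruct (Rlt_or_le 0 (1 - vt - r)) as [Hm1|Hm1].
  - exists 1. rewrite !Rmult_1_r. split; [lra | split; [lra | exact (H1 Hm1)]].
  - set (q0 := h' 0 / (gamma * h 0)).
    assert (Hq0 : 0 < q0).
    { pose proof (h_pos 0 ltac:(lra)).
      pose proof (concave_deriv_pos h h' Hderiv Hconc Hincr 0 ltac:(lra)).
      apply Rdiv_lt_0_compat; [assumption | nra]. }
    assert (Hrq : r / (1 - vt) < q0).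
    { unfold dlog_profit in H0. fold q0 in H0.
      rewrite !Rmult_0_r, !Rminus_0_r, Rdiv_1_r in H0. lra. }
    apply (Rlt_div_l r q0 (1 - vt)) in Hrq; [|lra].
    assert (Hr1 : r / (q0 + 1) < 1 - vt) by (apply Rlt_div_l; lra).
    assert (Hr0 : 0 < r / (q0 + 1)) by (apply Rdiv_lt_0_compat; lra).
    (* [b] is where the risk term [r / (1 - vt - r * b)] reaches [q0 + 1]. *)
    set (b := ((1 - vt) - r / (q0 + 1)) / r).
    assert (Hbr : b * r = (1 - vt) - r / (q0 + 1)) by (unfold b; field; lra).
    assert (Hb : 0 < b <= 1) by (split; nra).
    exists b. split; [exact Hb | split; [lra|]].
    pose proof (marginal_quality_antitone 0 b ltac:(lra) ltac:(lra) ltac:(lra)) as Hqb.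
    fold q0 in Hqb.
    pose proof n_ge_1.
    assert (0 < rho / (1 - rho * (INR n * b))) by (apply Rdiv_lt_0_compat; nra).
    assert (r / (1 - vt - r * b) = q0 + 1).
    { replace (1 - vt - r * b) with (r / (q0 + 1)) by lra. field. lra. }
    unfold dlog_profit. lra.
Qed.

(* Along the diagonal, [dlog_profit] is the derivative of this potential.  As [h'] is not
   assumed continuous, a root is found by [derive_root] rather than by the intermediate
   value theorem. *)
Definition symmetric_potential : R -> R :=
  log_payoff (1 / gamma) (/ INR n) 1 (- (INR n * rho)) (1 - vt) (- r) h.

Lemma symmetric_potential_derive c : 0 <= c <= 1 -> 0 < 1 - vt - r * c ->
  derivable_pt_lim symmetric_potential c (dlog_profit c (INR n * c)).
Proof.
  intros Hc Hm. pose proof n_ge_1. pose proof (h_pos c Hc).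
  assert (INR n * rho * c <= INR n * rho * 1) by (apply Rmult_le_compat_l; nra).
  replace (dlog_profit c (INR n * c)) with
    (1 / gamma * (h' c / h c) + / INR n * (- (INR n * rho) / (1 + - (INR n * rho) * c))
     + - r / (1 - vt + - r * c)).
  - apply log_payoff_derive; try assumption; lra.
  - unfold dlog_profit.
    replace (1 + - (INR n * rho) * c) with (1 - rho * (INR n * c)) by ring.
    replace (1 - vt + - r * c) with (1 - vt - r * c) by ring.
    field. repeat split; lra.
Qed.

Lemma dlog_profit_diag_root : 0 < r -> 0 < dlog_profit 0 0 ->
  (0 < 1 - vt - r -> dlog_profit 1 (INR n) < 0) ->
  exists M, 0 < M < 1 /\ 0 < 1 - vt - r * M /\ dlog_profit M (INR n * M) = 0.
Proof.
  intros Hr H0 H1.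
  destruct (dlog_profit_diag_neg Hr H0 H1) as [b [Hb [Hmb HDb]]].
  destruct (derive_root symmetric_potential (fun c => dlog_profit c (INR n * c)) 0 b ltac:(lra))
    as [M [HM HDM]].
  - intros c Hc. apply symmetric_potential_derive; [lra | nra].
  - rewrite Rmult_0_r. exact H0.
  - exact HDb.
  - exists M. split; [lra | split; [nra | exact HDM]].
Qed.

Hypothesis Hh0 : h 0 = 1.
Hypothesis Hh1 : h 1 = hbar.
Hypothesis Hmarg : forall x, 0 <= x <= 1 ->
  h' x / (gamma * h x) > INR n * rho / (1 - INR n * rho * x).

Local Notation gain1 := (h' 1 / (gamma * hbar) - rho / (1 - INR n * rho)).

Lemma rho_frac_le x : 0 <= x <= 1 ->
  rho / (1 - INR n * rho * x) <= INR n * rho / (1 - INR n * rho * x).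
Proof.
  intros Hx. pose proof n_ge_1.
  assert (INR n * rho * x <= INR n * rho * 1) by (apply Rmult_le_compat_l; nra).
  unfold Rdiv. apply Rmult_le_compat_r; [left; apply Rinv_0_lt_compat | nra]; lra.
Qed.

Lemma gain1_pos : 0 < gain1.
Proof.
  pose proof (Hmarg 1 ltac:(lra)) as H. pose proof (rho_frac_le 1 ltac:(lra)).
  rewrite Hh1, Rmult_1_r in *. lra.
Qed.

Lemma tau2_eq : tau2 n gamma rho hbar h' = gain1 / (gain1 + 1).
Proof.
  pose proof gain1_pos. unfold tau2.
  set (g := h' 1 / (gamma * hbar) - rho / (1 - INR n * rho)) in *.
  field. split; lra.
Qed.

Lemma tau_order : tau1 gamma rho h' > tau2 n gamma rho hbar h' /\ tau2 n gamma rho hbar h' > 0.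
Proof.
  pose proof gain1_pos. pose proof n_ge_1. rewrite tau2_eq.
  pose proof (marginal_quality_antitone 0 1 ltac:(lra) ltac:(lra) ltac:(lra)) as Hq.
  rewrite Hh0, Hh1, Rmult_1_r in Hq.
  assert (rho <= rho / (1 - INR n * rho)) by (apply Rle_div_r; nra).
  assert (gain1 / (gain1 + 1) < gain1) by (apply Rlt_div_l; nra).
  split; [unfold tau1 | apply Rdiv_lt_0_compat]; lra.
Qed.

Lemma dlog_profit_origin : dlog_profit 0 0 = tau1 gamma rho h' - r / (1 - vt).
Proof.
  unfold dlog_profit, tau1. rewrite Hh0, !Rmult_0_r, !Rminus_0_r, Rmult_1_r, Rdiv_1_r. reflexivity.
Qed.

Lemma dlog_profit_full : dlog_profit 1 (INR n) = gain1 - r / (1 - vt - r).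
Proof.
  unfold dlog_profit. rewrite Hh1, Rmult_1_r, (Rmult_comm rho). reflexivity.
Qed.

Lemma xhat_eq_iff y : 0 < r -> 0 <= y <= 1 ->
  xhat_eq n gamma rho theta t vt h h' y <->
  0 < 1 - vt - r * y /\ dlog_profit y (INR n * y) = 0.
Proof.
  intros Hr Hy.
  set (p := h' y / (gamma * h y) - rho / (1 - INR n * rho * y)).
  assert (Hp : 0 < p) by (pose proof (Hmarg y Hy); pose proof (rho_frac_le y Hy); unfold p; lra).
  assert (HD : dlog_profit y (INR n * y) = p - r / (1 - vt - r * y)).
  { unfold dlog_profit, p. replace (rho * (INR n * y)) with (INR n * rho * y) by ring.
    reflexivity. }
  unfold xhat_eq. fold p. rewrite HD. split.
  - intros Heq. assert (Hm : 0 < 1 - vt - r * y) by nra.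
    split; [exact Hm|].
    assert (r / (1 - vt - r * y) = p) by (rewrite <- Heq at 1; field; lra). lra.
  - intros [Hm HD0]. replace p with (r / (1 - vt - r * y)) by lra. field. lra.
Qed.

Lemma equilibria_are_zero : r >= tau1 gamma rho h' * (1 - vt) ->
  equilibria_are n gamma V0 rho theta t vt alpha h 0.
Proof.
  intros Hr.
  assert (H0 : dlog_profit 0 0 <= 0).
  { rewrite dlog_profit_origin. enough (tau1 gamma rho h' <= r / (1 - vt)) by lra.
    apply Rle_div_r; lra. }
  apply equilibria_are_intro; [lra | | intros x; apply foc_only_zero; exact H0].
  rewrite Rmult_0_r. split; [lra | split; [intros _; exact H0 | lra]].
Qed.

Lemma equilibria_are_one : r <= tau2 n gamma rho hbar h' * (1 - vt) ->
  equilibria_are n gamma V0 rho theta t vt alpha h 1.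
Proof.
  intros Hr. rewrite tau2_eq in Hr. pose proof gain1_pos.
  assert (Hm1 : r < 1 - vt).
  { assert (gain1 / (gain1 + 1) < 1) by (apply Rlt_div_l; lra). nra. }
  assert (H1 : 0 <= dlog_profit 1 (INR n)).
  { rewrite dlog_profit_full. apply (div_sub_le_iff gain1 (1 - vt) r) in Hr; lra. }
  apply equilibria_are_intro; [lra | | intros x; apply foc_only_one; [lra | exact H1]].
  rewrite Rmult_1_r. split; [lra | split; [lra | intros _; exact H1]].
Qed.

Lemma interior_equilibrium :
  tau2 n gamma rho hbar h' * (1 - vt) < r < tau1 gamma rho h' * (1 - vt) ->
  exists xh, 0 < xh < 1 /\ xhat_eq n gamma rho theta t vt h h' xh /\
    (forall y, 0 < y < 1 -> xhat_eq n gamma rho theta t vt h h' y -> y = xh) /\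
    equilibria_are n gamma V0 rho theta t vt alpha h xh.
Proof.
  intros [Hlo Hhi]. rewrite tau2_eq in Hlo. pose proof gain1_pos.
  assert (Hr : 0 < r).
  { assert (0 < gain1 / (gain1 + 1)) by (apply Rdiv_lt_0_compat; lra). nra. }
  assert (H0 : 0 < dlog_profit 0 0).
  { rewrite dlog_profit_origin. enough (r / (1 - vt) < tau1 gamma rho h') by lra.
    apply Rlt_div_l; lra. }
  assert (H1 : 0 < 1 - vt - r -> dlog_profit 1 (INR n) < 0).
  { intros Hm1. rewrite dlog_profit_full.
    enough (~ r / (1 - vt - r) <= gain1) by lra.
    rewrite div_sub_le_iff by lra. lra. }
  destruct (dlog_profit_diag_root Hr H0 H1) as [M [HM [HmM HDM]]].
  exists M. split; [exact HM|]. split; [apply xhat_eq_iff; [exact Hr | lra | split; assumption]|].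
  split.
  - intros y Hy Hxe. apply xhat_eq_iff in Hxe as [Hmy HDy]; [|exact Hr | lra].
    apply dlog_profit_diag_root_unique; lra.
  - apply equilibria_are_intro; [lra | | intros x; apply foc_only_root; try assumption; lra].
    split; [exact HmM | split; intros; lra].
Qed.

End Game.

Theorem theorem2 (n : nat) (gamma V0 rho theta t vt hbar : R)
  (alpha : nat -> R) (h h' : R -> R)
  (Hn : (1 <= n)%nat) (Hgamma : 1 < gamma) (HV0 : 0 < V0)
  (Hrho : 0 < rho < 1 / INR n) (Htheta : 1 < theta)
  (Ht : 0 <= t <= INR n) (Hvt : 0 < vt < 1)
  (Halpha_dec : forall i j, (i < j)%nat -> (j < n)%nat -> alpha j < alpha i)
  (Halpha_pos : forall i, (i < n)%nat -> 0 < alpha i)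
  (Hderiv : forall x, 0 <= x <= 1 -> is_derive h x (h' x))
  (Hincr : forall x y, 0 <= x -> x < y -> y <= 1 -> h x < h y)
  (Hconc : forall x y l, 0 <= x <= 1 -> 0 <= y <= 1 -> 0 <= l <= 1 ->
             l * h x + (1 - l) * h y <= h (l * x + (1 - l) * y))
  (Hrange : forall x, 0 <= x <= 1 -> 1 <= h x)
  (Hh0 : h 0 = 1) (Hh1 : h 1 = hbar) (Hhbar : 1 < hbar)
  (Hcond1 : INR n * ((gamma - 1) / gamma) < 1)
  (Hcond2 : Rpower hbar (1 / gamma) > 1 / (1 - INR n * rho))
  (Hcond3 : forall x, 0 <= x <= 1 ->
             h' x / (gamma * h x) > INR n * rho / (1 - INR n * rho * x)) :
  tau1 gamma rho h' > tau2 n gamma rho hbar h' /\ tau2 n gamma rho hbar h' > 0 /\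
  (risk n theta t >= tau1 gamma rho h' * (1 - vt) ->
     equilibria_are n gamma V0 rho theta t vt alpha h 0) /\
  (risk n theta t <= tau2 n gamma rho hbar h' * (1 - vt) ->
     equilibria_are n gamma V0 rho theta t vt alpha h 1) /\
  (tau2 n gamma rho hbar h' * (1 - vt) < risk n theta t < tau1 gamma rho h' * (1 - vt) ->
     exists xh, 0 < xh < 1 /\
       xhat_eq n gamma rho theta t vt h h' xh /\
       (forall y, 0 < y < 1 -> xhat_eq n gamma rho theta t vt h h' y -> y = xh) /\
       equilibria_are n gamma V0 rho theta t vt alpha h xh).
Proof.
  destruct Hrho as [Hrho0 Hrho1]. destruct Hvt as [_ Hvt1].
  assert (Hnrho : INR n * rho < 1).
  { pose proof (le_INR 1 n Hn) as HnR. simpl in HnR.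
    apply (Rmult_lt_compat_l (INR n)) in Hrho1; [|lra].
    replace (INR n * (1 / INR n)) with 1 in Hrho1 by (field; lra). exact Hrho1. }
  pose proof (Vstar_pos n gamma V0 Hgamma HV0 Hcond1) as HV.
  assert (Hrisk : 0 <= risk n theta t).
  { unfold risk. pose proof (lt_0_INR n ltac:(lia)).
    apply Rdiv_le_0_compat; [apply Rmult_le_pos|]; lra. }
  split; [|split; [|split; [|split]]].
  - eapply tau_order; eassumption.
  - eapply tau_order; eassumption.
  - eapply equilibria_are_zero; eassumption.
  - eapply equilibria_are_one; eassumption.
  - eapply interior_equilibrium; eassumption.
Qed.
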